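(* Let $q\ge1$ and assume Hypothesis (H$_q$). Then for every $\theta>0$, $$\Big|\frac16\Big[f(ma)+4f\Big(\frac{m(a+b)}{2}\Big)+f(mb)\Big]-\frac{\Gamma(\theta+1)2^{\theta-1}}{m^\theta(b-a)^\theta}\Big[J^\theta_{(\frac{m(a+b)}{2})^-}f(ma)+J^\theta_{(\frac{m(a+b)}{2})^+}f(mb)\Big]\Big|$$ $$\le\frac{m(b-a)}{4}A_1\big(\theta,\tfrac13\big)^{1-\frac1q}\Big\{\Big(\Big|f'\Big(\frac{m(a+b)}2\Big)\Big|^qA_2\big(\alpha,\theta,\tfrac13\big)+m|f'(a)|^qA_3\big(\alpha,\theta,\tfrac13\big)\Big)^{\frac1q}+\Big(\Big|f'\Big(\frac{m(a+b)}2\Big)\Big|^qA_2\big(\alpha,\theta,\tfrac13\big)+m|f'(b)|^qA_3\big(\alpha,\theta,\tfrac13\big)\Big)^{\frac1q}\Big\}.$$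
   Context: Let $\Gamma$ denote Euler's Gamma function. For $\theta>0$, $c=\frac{m(a+b)}{2}$: $J^\theta_{c^-}f(ma)=\frac{1}{\Gamma(\theta)}\int_{ma}^{c}(s-ma)^{\theta-1}f(s)\,ds$ and $J^\theta_{c^+}f(mb)=\frac{1}{\Gamma(\theta)}\int_{c}^{mb}(mb-s)^{\theta-1}f(s)\,ds$. $(\alpha,m)$-convexity: for $(\alpha,m)\in[0,1]\times(0,1]$ and an interval $K\subseteq[0,\infty)$, a function $g:K\to\mathbb{R}$ is $(\alpha,m)$-convex on $K$ if $g(tX+m(1-t)Y)\le t^\alpha g(X)+m(1-t^\alpha)g(Y)$ for all $X,Y\in K$ and $t\in[0,1]$ with $tX+m(1-t)Y\in K$ (convention $0^0=1$). Hypothesis (H$_q$): $I\subseteq[0,\infty)$ is an interval, $f:I\to\mathbb{R}$ is differentiable on the interior $I^\circ$, $m\in(0,1]$, $\alpha\in[0,1]$, $a<b$ with $ma,b\in I^\circ$, $f'$ is Lebesgue integrable on $[ma,mb]$, and $|f'|^q$ is $(\alpha,m)$-convex on $[ma,b]$. Constants: $A_1(\theta,\lambda)=\frac{2\theta\lambda^{1+\frac1\theta}+1}{\theta+1}-\lambda$, $A_2(\alpha,\theta,\lambda)=\frac{2\theta\lambda^{1+\frac{1+\alpha}{\theta}}}{(\alpha+1)(\alpha+\theta+1)}+\frac{1}{\alpha+\theta+1}-\frac{\lambda}{\alpha+1}$, $A_3(\alpha,\theta,\lambda)=A_1(\theta,\lambda)-A_2(\alpha,\theta,\lambda)$. *)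

From Stdlib Require Import Reals Lra Classical ClassicalEpsilon.
Open Scope R_scope.

(* x^y for x >= 0, y > 0 (value 0 at x = 0; x <= 0 never used otherwise) *)
Definition rpow (x y : R) : R := if Rlt_dec 0 x then Rpower x y else 0.

(* t^alpha for t in [0,1], with the convention 0^0 = 1 *)
Definition tpow (t alpha : R) : R :=
  if Rlt_dec 0 t then Rpower t alpha
  else if Req_EM_T alpha 0 then 1 else 0.

Definition is_RInt (g : R -> R) (a b v : R) : Prop :=
  exists pr : Riemann_integrable g a b, RiemannInt pr = v.

Definition lim_left_int (g : R -> R) (a b l : R) : Prop :=
  forall eps, 0 < eps -> exists delta, 0 < delta /\
    forall h, 0 < h < delta -> exists v, is_RInt g (a + h) b v /\ Rabs (v - l) < eps.

Definition lim_right_int (g : R -> R) (a b l : R) : Prop :=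
  forall eps, 0 < eps -> exists delta, 0 < delta /\
    forall h, 0 < h < delta -> exists v, is_RInt g a (b - h) v /\ Rabs (v - l) < eps.

(* Euler's Gamma function: Gamma(th) = int_0^oo t^(th-1) e^(-t) dt *)
Definition Gamma (th : R) : R :=
  epsilon (inhabits 0) (fun l =>
    forall eps, 0 < eps -> exists delta, 0 < delta /\ exists M,
      forall h X, 0 < h < delta -> M < X ->
        exists v, is_RInt (fun t => Rpower t (th - 1) * exp (- t)) h X v
                  /\ Rabs (v - l) < eps).

(* J^th_{c-} f(x) = 1/Gamma(th) int_x^c (s-x)^(th-1) f(s) ds *)
Definition JL (th c : R) (f : R -> R) (x : R) : R :=
  / Gamma th * epsilon (inhabits 0)
    (fun l => lim_left_int (fun s => Rpower (s - x) (th - 1) * f s) x c l).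

(* J^th_{c+} f(x) = 1/Gamma(th) int_c^x (x-s)^(th-1) f(s) ds *)
Definition JR (th c : R) (f : R -> R) (x : R) : R :=
  / Gamma th * epsilon (inhabits 0)
    (fun l => lim_right_int (fun s => Rpower (x - s) (th - 1) * f s) c x l).

Definition is_interval (I : R -> Prop) : Prop :=
  forall x y z, I x -> I z -> x <= y <= z -> I y.

Definition int_pt (I : R -> Prop) (x : R) : Prop :=
  exists d, 0 < d /\ forall y, Rabs (y - x) < d -> I y.

Definition alpha_m_convex (alpha m : R) (K : R -> Prop) (g : R -> R) : Prop :=
  forall X Y t, K X -> K Y -> 0 <= t <= 1 -> K (t * X + m * (1 - t) * Y) ->
    g (t * X + m * (1 - t) * Y) <= tpow t alpha * g X + m * (1 - tpow t alpha) * g Y.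

Definition HA1 (th lam : R) : R :=
  (2 * th * rpow lam (1 + 1 / th) + 1) / (th + 1) - lam.

Definition HA2 (alpha th lam : R) : R :=
  2 * th * rpow lam (1 + (1 + alpha) / th) / ((alpha + 1) * (alpha + th + 1))
  + 1 / (alpha + th + 1) - lam / (alpha + 1).

Definition HA3 (alpha th lam : R) : R := HA1 th lam - HA2 alpha th lam.

(* With c = m(a+b)/2 and h = m(b-a)/2, the substitutions s = ma + h t on the
   left half [ma, c] and s = mb - h t on the right half [c, mb] turn each
   half into [0,1] and the fractional integral into (h^th/th) int_0^1 F d(t^th),
   where F is f along the substitution.  The theorem is then the average of two
   instances of the weighted endpoint estimate

     |2/3 F(1) + 1/3 F(0) - int_0^1 F d(t^th)| <= h A1^(1-1/q) (U A2 + W A3)^(1/q)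

   under |F'/h|^q <= t^al U + (1 - t^al) W, the bound that (alpha,m)-convexity
   of |f'|^q provides.  This estimate is proved in three steps:
   - a pointwise bound |F'| <= P + Q t^al yields P A1 + Q A2, by integrating by
     parts against s^th - 1/3 (done by comparing derivatives on both sides of
     the crossing point 3^(-1/th), since F' need not be integrable, and letting
     the lower limit tend to 0);
   - Young's inequality with a free parameter K > 0 turns the q-th power bound
     into such a pointwise bound;
   - optimising over K gives the power mean A1^(1-1/q) (U A2 + W A3)^(1/q). *)

From Pilot Require Import Defs.
From Stdlib Require Import Reals Lra ClassicalEpsilon.
From Coquelicot Require Import Coquelicot.
Open Scope R_scope.

Lemma Rpower_pos x y : 0 < Rpower x y.
Proof. apply exp_pos. Qed.

Lemma Rpower_one_base y : Rpower 1 y = 1.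
Proof. unfold Rpower; rewrite ln_1, Rmult_0_r; apply exp_0. Qed.

Lemma Rpower_le_one t y : 0 < t <= 1 -> 0 <= y -> Rpower t y <= 1.
Proof. intros. rewrite <- (Rpower_one_base y). apply Rle_Rpower_l; lra. Qed.

Lemma Rpower_le_base t y : 0 < t <= 1 -> 1 <= y -> Rpower t y <= t.
Proof.
  intros Ht Hy. replace y with (1 + (y - 1)) by ring.
  rewrite Rpower_plus, Rpower_1 by lra.
  pose proof (Rpower_le_one t (y - 1) Ht ltac:(lra)). pose proof (Rpower_pos t (y - 1)).
  nra.
Qed.

Lemma rpow_of_pos x y : 0 < x -> rpow x y = Rpower x y.
Proof. intros. unfold rpow. destruct (Rlt_dec 0 x); [reflexivity | lra]. Qed.

Lemma rpow_nonneg x y : 0 <= rpow x y.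
Proof. unfold rpow. destruct (Rlt_dec 0 x); [left; apply Rpower_pos | lra]. Qed.

Lemma tpow_of_pos t al : 0 < t -> tpow t al = Rpower t al.
Proof. intros. unfold tpow. destruct (Rlt_dec 0 t); [reflexivity | lra]. Qed.

Lemma ball_R (x r y : R) : ball x r y <-> Rabs (y - x) < r.
Proof. reflexivity. Qed.

Lemma at_right_0_below d : 0 < d -> at_right 0 (fun e => 0 < e < d).
Proof.
  intros Hd. exists (mkposreal d Hd). intros y Hy Hy0.
  assert (Hy' : Rabs (y - 0) < d) by exact Hy.
  rewrite Rminus_0_r in Hy'. apply Rabs_def2 in Hy'. lra.
Qed.

Lemma lim_plus {T} {F : (T -> Prop) -> Prop} {FF : Filter F} (u v : T -> R) U V :
  filterlim u F (locally U) -> filterlim v F (locally V) ->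
  filterlim (fun x => u x + v x) F (locally (U + V)).
Proof. intros Hu Hv. eapply filterlim_comp_2; [exact Hu | exact Hv | apply (filterlim_plus U V)]. Qed.

Lemma lim_mult {T} {F : (T -> Prop) -> Prop} {FF : Filter F} (u v : T -> R) U V :
  filterlim u F (locally U) -> filterlim v F (locally V) ->
  filterlim (fun x => u x * v x) F (locally (U * V)).
Proof. intros Hu Hv. eapply filterlim_comp_2; [exact Hu | exact Hv | apply (filterlim_mult U V)]. Qed.

Lemma lim_minus {T} {F : (T -> Prop) -> Prop} {FF : Filter F} (u v : T -> R) U V :
  filterlim u F (locally U) -> filterlim v F (locally V) ->
  filterlim (fun x => u x - v x) F (locally (U - V)).
Proof.
  intros Hu Hv. replace (U - V) with (U + -1 * V) by ring.
  eapply filterlim_ext; [| apply (lim_plus u (fun x => -1 * v x) _ _ Hu), lim_mult, Hv].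
  - intros x; simpl; ring.
  - apply filterlim_const.
Qed.

Lemma lim_le {T} {F : (T -> Prop) -> Prop} {FF : ProperFilter F} (u v : T -> R) U V :
  filterlim u F (locally U) -> filterlim v F (locally V) ->
  F (fun x => u x <= v x) -> U <= V.
Proof. intros Hu Hv Huv. exact (filterlim_le u v U V Huv Hu Hv). Qed.

Lemma Rpower_lim_0 th : 0 < th -> filterlim (fun x => Rpower x th) (at_right 0) (locally 0).
Proof.
  intros Hth. apply filterlim_locally. intros eps.
  pose proof (cond_pos eps) as He.
  eapply filter_imp; [| apply (at_right_0_below (Rpower eps (/ th)) (Rpower_pos _ _))].
  intros x Hx. apply ball_R. rewrite Rminus_0_r, Rabs_right by (left; apply Rpower_pos).
  replace (pos eps) with (Rpower (Rpower eps (/ th)) th)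
    by (rewrite Rpower_mult, Rinv_l, Rpower_1; lra).
  apply Rlt_Rpower_l; lra.
Qed.

Lemma lim_of_modulus {T} {F : (T -> Prop) -> Prop} {FF : ProperFilter F}
  (V w : T -> R) (P : T -> Prop) :
  F P -> filterlim w F (locally 0) ->
  (forall u v, P u -> P v -> Rabs (V u - V v) <= Rabs (w u) + Rabs (w v)) ->
  exists L, filterlim V F (locally L).
Proof.
  intros HP Hw Hosc. apply (filterlim_locally_cauchy (U := R_CompleteSpace)).
  intros eps. pose proof (cond_pos eps) as He.
  exists (fun u => P u /\ Rabs (w u) < eps / 2). split.
  - apply filter_and; [exact HP |].
    apply filterlim_locally with (eps := mkposreal (eps / 2) ltac:(lra)) in Hw.
    eapply filter_imp; [| exact Hw]. intros u Hu.
    assert (Hu' : Rabs (w u - 0) < eps / 2) by exact Hu.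
    rewrite Rminus_0_r in Hu'. exact Hu'.
  - intros u v [Pu Hu] [Pv Hv]. apply ball_R. rewrite Rabs_minus_sym.
    specialize (Hosc u v Pu Pv). lra.
Qed.

Lemma lim_right_of_continuous (g : R -> R) x :
  continuous g x -> filterlim g (at_right x) (locally (g x)).
Proof. intros Hg. exact (filterlim_filter_le_1 _ (filter_le_within _) Hg). Qed.

Lemma continuous_bounded (g : R -> R) a b : a <= b ->
  (forall z, a <= z <= b -> continuous g z) ->
  exists M, forall z, a <= z <= b -> Rabs (g z) <= M.
Proof.
  intros Hab Hg.
  destruct (continuity_ab_maj g a b Hab) as [x1 [Hx1 _]].
  { intros z Hz. apply continuity_pt_filterlim, Hg, Hz. }
  destruct (continuity_ab_maj (fun z => - g z) a b Hab) as [x2 [Hx2 _]].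
  { intros z Hz. apply continuity_pt_opp, continuity_pt_filterlim, Hg, Hz. }
  exists (Rmax (g x1) (- g x2)). intros z Hz.
  pose proof (Hx1 z Hz). pose proof (Hx2 z Hz).
  pose proof (Rmax_l (g x1) (- g x2)). pose proof (Rmax_r (g x1) (- g x2)).
  apply Rabs_le. lra.
Qed.

Lemma is_derive_Rpower y x : 0 < x -> is_derive (fun t => Rpower t y) x (y * Rpower x (y - 1)).
Proof. intros; apply is_derive_Reals, derivable_pt_lim_power; auto. Qed.

Lemma ex_derive_Rpower y x : 0 < x -> ex_derive (fun t => Rpower t y) x.
Proof. intros Hx. eexists. apply is_derive_Rpower, Hx. Qed.

Lemma Derive_Rpower y x : 0 < x -> Derive (fun t => Rpower t y) x = y * Rpower x (y - 1).
Proof. intros Hx. apply is_derive_unique, is_derive_Rpower, Hx. Qed.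

Lemma continuous_of_derive (f : R -> R) x d : is_derive f x d -> continuous f x.
Proof.
  intros H. apply continuity_pt_filterlim, derivable_continuous_pt.
  exists d. apply is_derive_Reals; auto.
Qed.

Lemma nondecreasing_of_derive (g g' : R -> R) x y : x <= y ->
  (forall t, x <= t <= y -> is_derive g t (g' t)) ->
  (forall t, x < t < y -> 0 <= g' t) -> g x <= g y.
Proof.
  intros [Hxy | ->] Hd Hpos; [| lra].
  destruct (MVT_cor2 g g' x y Hxy) as [c [Hc1 Hc2]].
  - intros c Hc; apply is_derive_Reals; auto.
  - pose proof (Hpos c Hc2). nra.
Qed.

Lemma increment_dominated (g g' G G' : R -> R) x y : x <= y ->
  (forall t, x <= t <= y -> is_derive g t (g' t)) ->
  (forall t, x <= t <= y -> is_derive G t (G' t)) ->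
  (forall t, x < t < y -> Rabs (g' t) <= G' t) ->
  Rabs (g y - g x) <= G y - G x.
Proof.
  intros Hxy Hg HG Hdom.
  assert (Hup : G x - g x <= G y - g y).
  { apply (nondecreasing_of_derive (fun t => G t - g t) (fun t => G' t - g' t)); auto.
    - intros t Ht. apply (is_derive_minus G g); auto.
    - intros t Ht. specialize (Hdom t Ht). apply Rabs_le_between in Hdom. lra. }
  assert (Hlow : G x + g x <= G y + g y).
  { apply (nondecreasing_of_derive (fun t => G t + g t) (fun t => G' t + g' t)); auto.
    - intros t Ht. apply (is_derive_plus G g); auto.
    - intros t Ht. specialize (Hdom t Ht). apply Rabs_le_between in Hdom. lra. }
  apply Rabs_le. lra.
Qed.

Lemma is_derive_RInt_upper (G : R -> R) (e t lo hi : R) : lo < e < hi -> lo < t < hi ->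
  (forall z, lo < z < hi -> continuous G z) ->
  is_derive (fun x => RInt G e x) t (G t).
Proof.
  intros He Ht HG. apply (is_derive_RInt G (fun x => RInt G e x) e t); [| apply HG; auto].
  assert (Hr : 0 < Rmin (t - lo) (hi - t)) by (apply Rmin_glb_lt; lra).
  exists (mkposreal _ Hr). intros y Hy.
  assert (Hy' : Rabs (y - t) < Rmin (t - lo) (hi - t)) by exact Hy.
  pose proof (Rmin_l (t - lo) (hi - t)). pose proof (Rmin_r (t - lo) (hi - t)).
  apply Rabs_def2 in Hy'.
  apply (RInt_correct (V := R_CompleteNormedModule)).
  apply (ex_RInt_continuous (V := R_CompleteNormedModule)). intros z Hz. apply HG.
  assert (lo < Rmin e y) by (apply Rmin_glb_lt; lra).
  assert (Rmax e y < hi) by (apply Rmax_lub_lt; lra).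
  lra.
Qed.

(** The weighted endpoint estimate. *)

(* int_e^1 F(s) d(s^th), the integral against the weight th s^(th-1). *)
Definition weighted_int (th : R) (F : R -> R) (e : R) : R :=
  RInt (fun s => th * Rpower s (th - 1) * F s) e 1.

(* An antiderivative of t |-> (la - t^th) (P + Q t^al). *)
Definition Phi (th al la P Q t : R) : R :=
  P * (la * t - / (th + 1) * Rpower t (th + 1))
  + Q * (la * / (al + 1) * Rpower t (al + 1) - / (al + th + 1) * Rpower t (al + th + 1)).

Lemma Phi_derive th al la P Q t : 0 < t -> 0 < th -> 0 <= al ->
  is_derive (Phi th al la P Q) t ((la - Rpower t th) * (P + Q * Rpower t al)).
Proof.
  intros Ht Hth Hal. unfold Phi.
  auto_derive; [repeat split; apply ex_derive_Rpower; exact Ht |].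
  rewrite !Derive_Rpower by exact Ht.
  replace (th + 1 - 1) with th by ring. replace (al + 1 - 1) with al by ring.
  replace (al + th + 1 - 1) with (al + th) by ring. rewrite Rpower_plus.
  field. lra.
Qed.

Lemma crossing_point th la : 0 < th -> 0 < la < 1 ->
  0 < Rpower la (/ th) < 1 /\ Rpower (Rpower la (/ th)) th = la.
Proof.
  intros Hth Hla. split; [split |].
  - apply Rpower_pos.
  - rewrite <- (Rpower_one_base (/ th)). apply Rlt_Rpower_l; [apply Rinv_0_lt_compat |]; lra.
  - rewrite Rpower_mult, Rinv_l by lra. apply Rpower_1; lra.
Qed.

(* The value of int_0^1 |s^th - la| (P + Q s^al) ds in terms of HA1, HA2. *)
Lemma Phi_total th al la P Q : 0 < th -> 0 <= al -> 0 < la < 1 ->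
  2 * Phi th al la P Q (Rpower la (/ th)) - Phi th al la P Q 1 = P * HA1 th la + Q * HA2 al th la.
Proof.
  intros Hth Hal Hla.
  destruct (crossing_point th la Hth Hla) as [Ht0 Ht0p].
  set (t0 := Rpower la (/ th)) in *.
  assert (X1 : Rpower la (1 + 1 / th) = la * t0).
  { rewrite Rpower_plus, Rpower_1 by lra. unfold t0, Rdiv. rewrite Rmult_1_l. reflexivity. }
  assert (X2 : Rpower la (1 + (1 + al) / th) = la * Rpower t0 (al + 1)).
  { replace (1 + (1 + al) / th) with (1 + / th * (al + 1)) by (field; lra).
    rewrite Rpower_plus, Rpower_1 by lra. unfold t0. rewrite Rpower_mult. reflexivity. }
  assert (X3 : Rpower t0 (th + 1) = la * t0).
  { rewrite Rpower_plus, Rpower_1, Ht0p by lra. reflexivity. }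
  assert (X4 : Rpower t0 (al + th + 1) = Rpower t0 (al + 1) * la).
  { replace (al + th + 1) with ((al + 1) + th) by ring. rewrite Rpower_plus, Ht0p. reflexivity. }
  unfold Phi, HA1, HA2. rewrite !rpow_of_pos by lra.
  rewrite !Rpower_one_base, X1, X2, X3, X4. field. lra.
Qed.

Lemma Phi_small th al la P Q e : 0 < th -> 0 <= al -> 0 < la < 1 -> 0 < e <= 1 ->
  Rabs (Phi th al la P Q e) <= 2 * (Rabs P + Rabs Q) * e.
Proof.
  intros Hth Hal Hla He.
  assert (Hpow : forall y, 0 <= y -> 0 < / (y + 1) <= 1 /\ 0 <= Rpower e (y + 1) <= e).
  { intros y Hy. split.
    - split; [apply Rinv_0_lt_compat; lra |].
      rewrite <- Rinv_1. apply Rinv_le_contravar; lra.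
    - split; [left; apply Rpower_pos | apply Rpower_le_base; lra]. }
  destruct (Hpow th ltac:(lra)) as [I1 A1].
  destruct (Hpow al Hal) as [I2 A2].
  destruct (Hpow (al + th) ltac:(lra)) as [I3 A3].
  unfold Phi.
  set (x1 := la * e - / (th + 1) * Rpower e (th + 1)).
  set (x2 := la * / (al + 1) * Rpower e (al + 1) - / (al + th + 1) * Rpower e (al + th + 1)).
  assert (B1 : Rabs x1 <= 2 * e) by (apply Rabs_le; unfold x1; split; nra).
  assert (B2 : Rabs x2 <= 2 * e).
  { assert (0 <= la * / (al + 1) <= 1) by (split; nra).
    apply Rabs_le; unfold x2; split; nra. }
  eapply Rle_trans; [apply Rabs_triang |]. rewrite !Rabs_mult.
  pose proof (Rabs_pos P). pose proof (Rabs_pos Q). nra.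
Qed.

Section EndpointEstimate.
Variables (F F' : R -> R) (th al la P Q : R).
Hypothesis Hth : 0 < th.
Hypothesis Hal : 0 <= al.
Hypothesis Hla : 0 < la < 1.
Hypothesis HF : forall t, 0 <= t < 2 -> is_derive F t (F' t).
Hypothesis HF' : forall t, 0 < t < 1 -> Rabs (F' t) <= P + Q * Rpower t al.

Let t0 := Rpower la (/ th).
Let Ph := Phi th al la P Q.

(* The remainder R_e(t) = (t^th - la) F(t) - int_e^t F d(s^th) of the
   integration by parts; R_e(1) - R_e(e) is the quantity to estimate. *)
Let remainder e t := (Rpower t th - la) * F t - RInt (fun s => th * Rpower s (th - 1) * F s) e t.

Lemma remainder_derive e t : 0 < e -> e <= t <= 1 ->
  is_derive (remainder e) t ((Rpower t th - la) * F' t).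
Proof.
  intros He Ht. set (G := fun s => th * Rpower s (th - 1) * F s).
  assert (HG : forall z, 0 < z < 2 -> continuous G z).
  { intros z Hz. eapply continuous_of_derive.
    apply (is_derive_mult (fun s => th * Rpower s (th - 1)) F);
      [apply is_derive_scal, is_derive_Rpower; lra | apply HF; lra | intros; apply Rmult_comm]. }
  replace ((Rpower t th - la) * F' t)
    with ((th * Rpower t (th - 1) - 0) * F t + (Rpower t th - la) * F' t - G t) by (unfold G; ring).
  apply (is_derive_minus (fun t => (Rpower t th - la) * F t) (fun x => RInt G e x)).
  - apply (is_derive_mult (fun t => Rpower t th - la) F);
      [apply (is_derive_minus (fun t => Rpower t th) (fun _ => la));
         [apply is_derive_Rpower; lra | apply is_derive_Reals, derivable_pt_lim_const]
      | apply HF; lra | intros; apply Rmult_comm].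
  - apply (is_derive_RInt_upper G e t 0 2); lra || exact HG.
Qed.

(* On [e,t0] the derivative of R_e is dominated by Phi', on [t0,1] by -Phi';
   this replaces the bound int_e^1 |s^th - la| (P + Q s^al) ds. *)
Lemma endpoint_estimate_segment e : 0 < e <= t0 ->
  Rabs ((1 - la) * F 1 - weighted_int th F e - (Rpower e th - la) * F e)
  <= 2 * Ph t0 - Ph 1 - Ph e.
Proof.
  intros He. destruct (crossing_point th la Hth Hla) as [Ht0 Ht0p]. fold t0 in Ht0, Ht0p.
  set (dR := fun t => (Rpower t th - la) * F' t).
  set (dPh := fun t => (la - Rpower t th) * (P + Q * Rpower t al)).
  assert (HPh : forall t, e <= t <= 1 -> is_derive Ph t (dPh t)).
  { intros t Ht. apply Phi_derive; lra. }
  assert (Hdom : forall t, 0 < t < 1 -> Rabs (dR t) <= Rabs (Rpower t th - la) * (P + Q * Rpower t al)).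
  { intros t Ht. unfold dR. rewrite Rabs_mult. apply Rmult_le_compat_l; [apply Rabs_pos | auto]. }
  assert (Left : Rabs (remainder e t0 - remainder e e) <= Ph t0 - Ph e).
  { apply (increment_dominated (remainder e) dR Ph dPh);
      [lra | intros; apply remainder_derive; lra | intros; apply HPh; lra |].
    intros t Ht. assert (Rpower t th <= la) by (rewrite <- Ht0p; apply Rle_Rpower_l; lra).
    eapply Rle_trans; [apply Hdom; lra |]. rewrite Rabs_left1 by lra. right; unfold dPh; ring. }
  assert (Right : Rabs (remainder e 1 - remainder e t0) <= Ph t0 - Ph 1).
  { replace (Ph t0 - Ph 1) with ((fun t => - Ph t) 1 - (fun t => - Ph t) t0) by ring.
    apply (increment_dominated (remainder e) dR (fun t => - Ph t) (fun t => - dPh t));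
      [lra | intros; apply remainder_derive; lra | intros; apply (is_derive_opp Ph), HPh; lra |].
    intros t Ht. assert (la <= Rpower t th) by (rewrite <- Ht0p; apply Rle_Rpower_l; lra).
    eapply Rle_trans; [apply Hdom; lra |]. rewrite Rabs_right by lra. right; unfold dPh; ring. }
  assert (R1 : remainder e 1 = (1 - la) * F 1 - weighted_int th F e).
  { unfold remainder, weighted_int. rewrite Rpower_one_base. reflexivity. }
  assert (Re : remainder e e = (Rpower e th - la) * F e).
  { unfold remainder. rewrite RInt_point. unfold zero; simpl. ring. }
  rewrite <- R1, <- Re.
  replace (remainder e 1 - remainder e e)
    with ((remainder e 1 - remainder e t0) + (remainder e t0 - remainder e e)) by ring.
  eapply Rle_trans; [apply Rabs_triang | lra].
Qed.

Lemma endpoint_estimate L : filterlim (weighted_int th F) (at_right 0) (locally L) ->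
  Rabs ((1 - la) * F 1 + la * F 0 - L) <= P * HA1 th la + Q * HA2 al th la.
Proof.
  intros HL. rewrite <- Phi_total by auto. fold t0 Ph.
  destruct (crossing_point th la Hth Hla) as [Ht0 _]. fold t0 in Ht0.
  set (Err := fun e => (1 - la) * F 1 - weighted_int th F e - (Rpower e th - la) * F e).
  assert (HErr : filterlim (fun e => Rabs (Err e)) (at_right 0)
                   (locally (Rabs ((1 - la) * F 1 + la * F 0 - L)))).
  { apply (filterlim_comp _ _ _ Err Rabs _ (locally ((1 - la) * F 1 + la * F 0 - L))),
      continuous_Rabs.
    replace ((1 - la) * F 1 + la * F 0 - L) with ((1 - la) * F 1 - L - (0 - la) * F 0) by ring.
    apply lim_minus; [apply lim_minus; [apply filterlim_const | exact HL] |].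
    apply lim_mult; [apply lim_minus; [apply Rpower_lim_0, Hth | apply filterlim_const] |].
    apply lim_right_of_continuous. eapply continuous_of_derive, HF. lra. }
  set (K := 2 * (Rabs P + Rabs Q)).
  enough (Hlim : Rabs ((1 - la) * F 1 + la * F 0 - L) <= 2 * Ph t0 - Ph 1 + K * 0) by lra.
  apply (lim_le (fun e => Rabs (Err e)) (fun e => 2 * Ph t0 - Ph 1 + K * e) _ _ HErr).
  - apply lim_plus; [apply filterlim_const | apply lim_mult; [apply filterlim_const |]].
    apply (lim_right_of_continuous (fun e => e)), continuous_id.
  - eapply filter_imp; [| apply (at_right_0_below t0); lra].
    intros e He. pose proof (endpoint_estimate_segment e ltac:(lra)) as Hseg.
    pose proof (Phi_small th al la P Q e Hth Hal Hla ltac:(lra)) as Hsmall.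
    apply Rabs_le_between in Hsmall. fold Ph in Hsmall. unfold Err, K. lra.
Qed.

End EndpointEstimate.

(** Signs of the constants A1, A2, A3 at la = 1/3. *)

Lemma weighted_int_zero th e : weighted_int th (fun _ => 0) e = 0.
Proof.
  unfold weighted_int.
  rewrite (RInt_ext (V := R_CompleteNormedModule) _ (fun _ => 0)) by (intros; simpl; ring).
  rewrite RInt_const. unfold scal; simpl; unfold mult; simpl. ring.
Qed.

(* P A1 + Q A2 bounds the integral of |s^th - la| (P + Q s^al), hence is
   nonnegative when P + Q s^al is; this is the endpoint estimate for F = 0. *)
Lemma majorant_nonneg th al la P Q : 0 < th -> 0 <= al -> 0 < la < 1 ->
  (forall t, 0 < t < 1 -> 0 <= P + Q * Rpower t al) ->
  0 <= P * HA1 th la + Q * HA2 al th la.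
Proof.
  intros Hth Hal Hla HPQ.
  eapply Rle_trans; [apply Rabs_pos |].
  apply (endpoint_estimate (fun _ => 0) (fun _ => 0)); auto.
  - intros; apply is_derive_Reals, derivable_pt_lim_const.
  - intros t Ht. rewrite Rabs_R0. auto.
  - eapply filterlim_ext; [| apply filterlim_const]. intros e. symmetry; apply weighted_int_zero.
Qed.

Lemma HA2_nonneg th al : 0 < th -> 0 <= al -> 0 <= HA2 al th (1 / 3).
Proof.
  intros Hth Hal. replace (HA2 al th (1 / 3)) with (0 * HA1 th (1 / 3) + 1 * HA2 al th (1 / 3)) by ring.
  apply majorant_nonneg; try lra. intros t Ht. pose proof (Rpower_pos t al). lra.
Qed.

Lemma HA3_nonneg th al : 0 < th -> 0 <= al -> 0 <= HA3 al th (1 / 3).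
Proof.
  intros Hth Hal. unfold HA3.
  replace (HA1 th (1 / 3) - HA2 al th (1 / 3))
    with (1 * HA1 th (1 / 3) + (-1) * HA2 al th (1 / 3)) by ring.
  apply majorant_nonneg; try lra. intros t Ht. pose proof (Rpower_le_one t al ltac:(lra) Hal). lra.
Qed.

(* A1 = (2 th t0 / 3 + 1) / (th + 1) - 1/3 with t0 = 3^(-1/th); positivity amounts to
   th (1 - 2 t0) < 2, clear for th <= 2 and, for th > 2, because then t0 > 1/2. *)
Lemma HA1_pos th : 0 < th -> 0 < HA1 th (1 / 3).
Proof.
  intros Hth.
  destruct (crossing_point th (1 / 3) Hth ltac:(lra)) as [Ht0 _].
  set (t0 := Rpower (1 / 3) (/ th)) in *.
  assert (E1 : HA1 th (1 / 3) = 2 * th * (1 / 3) * t0 / (th + 1) + 1 / (th + 1) - 1 / 3).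
  { unfold HA1. rewrite rpow_of_pos by lra.
    replace (1 + 1 / th) with (1 + / th) by (field; lra).
    rewrite Rpower_plus, Rpower_1 by lra. fold t0. field. lra. }
  assert (Hbig : 2 < th -> 1 / 2 < t0).
  { intros Hl. unfold t0, Rpower.
    replace (1 / 2) with (exp (ln (/ 2))) by (rewrite exp_ln; lra).
    apply exp_increasing. replace (1 / 3) with (/ 3) by field. rewrite !ln_Rinv by lra.
    assert (ln 3 < 2 * ln 2).
    { replace (2 * ln 2) with (ln (2 * 2)) by (rewrite ln_mult; lra). apply ln_increasing; lra. }
    assert (0 < ln 2) by (rewrite <- ln_1; apply ln_increasing; lra).
    assert (0 < / th < / 2) by (split; apply Rinv_0_lt_compat || apply Rinv_lt_contravar; lra).
    nra. }
  assert (th * (1 - 2 * t0) < 2).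
  { destruct (Rle_or_lt th 2) as [Hl | Hl]; [nra |]. specialize (Hbig Hl). nra. }
  rewrite E1. apply Rmult_lt_reg_r with (3 * (th + 1)); [lra |]. field_simplify; [| lra]. nra.
Qed.

(** The power-mean step (replacing Hoelder's inequality). *)

Lemma power_tangent q K z : 1 <= q -> 0 < K -> 0 < z ->
  Rpower K q + q * Rpower K (q - 1) * (z - K) <= Rpower z q.
Proof.
  intros Hq HK Hz.
  set (phi := fun x => Rpower x q - q * Rpower K (q - 1) * x).
  set (dphi := fun x => q * Rpower x (q - 1) - q * Rpower K (q - 1)).
  assert (Hd : forall x, 0 < x -> is_derive phi x (dphi x)).
  { intros x Hx. unfold phi, dphi. auto_derive; [apply ex_derive_Rpower; lra |].
    rewrite Derive_Rpower by lra. ring. }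
  assert (Hsign : forall t, 0 < t -> (K - t) * dphi t <= 0).
  { intros t Ht. unfold dphi.
    destruct (Rle_or_lt K t) as [Hl | Hl].
    - assert (Rpower K (q - 1) <= Rpower t (q - 1)) by (apply Rle_Rpower_l; lra).
      assert (0 <= q * (Rpower t (q - 1) - Rpower K (q - 1))) by (apply Rmult_le_pos; lra). nra.
    - assert (Rpower t (q - 1) <= Rpower K (q - 1)) by (apply Rle_Rpower_l; lra).
      assert (0 <= q * (Rpower K (q - 1) - Rpower t (q - 1))) by (apply Rmult_le_pos; lra). nra. }
  enough (phi K <= phi z) by (unfold phi in *; lra).
  destruct (Rle_or_lt K z) as [Hl | Hl].
  - apply (nondecreasing_of_derive phi dphi); auto; [intros t Ht; apply Hd; lra |].
    intros t Ht. specialize (Hsign t ltac:(lra)). nra.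
  - apply Ropp_le_cancel.
    apply (nondecreasing_of_derive (fun x => - phi x) (fun x => - dphi x)); [lra | |].
    + intros t Ht. apply (is_derive_opp phi), Hd; lra.
    + intros t Ht. specialize (Hsign t ltac:(lra)). nra.
Qed.

Lemma inv_exponent_bounds q : 1 <= q -> 0 < 1 / q <= 1.
Proof.
  intros Hq. split; [apply Rdiv_lt_0_compat; lra |].
  unfold Rdiv. rewrite Rmult_1_l, <- Rinv_1. apply Rinv_le_contravar; lra.
Qed.

Lemma young_param q K y : 1 <= q -> 0 < K -> 0 <= y ->
  y <= (1 - 1 / q) * K + 1 / q * Rpower K (1 - q) * rpow y q.
Proof.
  intros Hq HK Hy.
  pose proof (inv_exponent_bounds q Hq) as Hq1.
  pose proof (Rpower_pos K (1 - q)) as HKq.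
  unfold rpow. destruct (Rlt_dec 0 y) as [Hy0 | Hy0]; [| nra].
  pose proof (power_tangent q K y Hq HK Hy0) as Ht.
  assert (E1 : Rpower K (1 - q) * Rpower K q = K).
  { rewrite <- Rpower_plus. replace (1 - q + q) with 1 by ring. apply Rpower_1; lra. }
  assert (E2 : Rpower K (1 - q) * Rpower K (q - 1) = 1).
  { rewrite <- Rpower_plus. replace (1 - q + (q - 1)) with 0 by ring. apply Rpower_O; lra. }
  apply (Rmult_le_compat_l (1 / q * Rpower K (1 - q))) in Ht; [| nra].
  replace (1 / q * Rpower K (1 - q) * (Rpower K q + q * Rpower K (q - 1) * (y - K)))
    with (1 / q * (Rpower K (1 - q) * Rpower K q) + (Rpower K (1 - q) * Rpower K (q - 1)) * (y - K))
    in Ht by (field; lra).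
  rewrite E1, E2 in Ht. lra.
Qed.

Lemma young_optimum q A B X : 1 <= q -> 0 < A -> 0 <= B ->
  (forall K, 0 < K -> X <= (1 - 1 / q) * K * A + 1 / q * Rpower K (1 - q) * B) ->
  X <= rpow A (1 - 1 / q) * rpow B (1 / q).
Proof.
  intros Hq HA HB HK.
  pose proof (inv_exponent_bounds q Hq) as Hq1.
  rewrite (rpow_of_pos A) by lra.
  unfold rpow. destruct (Rlt_dec 0 B) as [HB' | HB'].
  - (* at K = (B/A)^(1/q) both terms equal exp((1-1/q) ln A + 1/q ln B) *)
    specialize (HK (Rpower (B / A) (1 / q)) (Rpower_pos _ _)).
    set (a := ln A) in *. set (b := ln B) in *.
    assert (EK : forall c, Rpower (Rpower (B / A) (1 / q)) c = exp (c * (1 / q) * (b - a))).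
    { intros c. unfold Rpower. rewrite ln_exp, ln_div by lra. f_equal; unfold a, b; ring. }
    rewrite <- (Rpower_1 (Rpower (B / A) (1 / q))) in HK at 1 by apply Rpower_pos.
    rewrite !EK in HK.
    replace A with (exp a) in HK by (apply exp_ln; lra).
    replace B with (exp b) in HK by (apply exp_ln; lra).
    rewrite !Rmult_assoc, <- !exp_plus in HK.
    replace (1 * (1 / q * (b - a)) + a) with ((1 - 1 / q) * a + 1 / q * b) in HK by (field; lra).
    replace ((1 - q) * (1 / q * (b - a)) + b) with ((1 - 1 / q) * a + 1 / q * b) in HK by (field; lra).
    unfold Rpower. fold a b. rewrite <- exp_plus. lra.
  - (* B = 0: letting K -> 0 forces X <= 0 *)
    rewrite Rmult_0_r. destruct (Rle_or_lt X 0) as [| HX]; auto.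
    specialize (HK (X / (2 * A)) ltac:(apply Rdiv_lt_0_compat; lra)).
    replace B with 0 in HK by lra.
    replace ((1 - 1 / q) * (X / (2 * A)) * A) with ((1 - 1 / q) * (X / 2)) in HK by (field; lra).
    nra.
Qed.

(* Young's inequality turns the hypothesis into |F'| <= P + Q t^al for every
   K > 0; the endpoint estimate applies, and the optimum over K is taken. *)
Lemma endpoint_power_mean (F F' : R -> R) th al q U W h L :
  0 < th -> 0 <= al -> 1 <= q -> 0 < h -> 0 <= U -> 0 <= W ->
  (forall t, 0 <= t < 2 -> is_derive F t (F' t)) ->
  (forall t, 0 < t < 1 ->
     rpow (Rabs (F' t) / h) q <= Rpower t al * U + (1 - Rpower t al) * W) ->
  filterlim (weighted_int th F) (at_right 0) (locally L) ->
  Rabs (2 / 3 * F 1 + 1 / 3 * F 0 - L)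
  <= h * (rpow (HA1 th (1 / 3)) (1 - 1 / q)
          * rpow (U * HA2 al th (1 / 3) + W * HA3 al th (1 / 3)) (1 / q)).
Proof.
  intros Hth Hal Hq Hh HU HW HF HB HL.
  pose proof (HA1_pos th Hth) as HA1p.
  pose proof (HA2_nonneg th al Hth Hal) as HA2p.
  pose proof (HA3_nonneg th al Hth Hal) as HA3p.
  pose proof (inv_exponent_bounds q Hq) as Hq1.
  set (E := Rabs (2 / 3 * F 1 + 1 / 3 * F 0 - L)).
  enough (HX : E / h <= rpow (HA1 th (1 / 3)) (1 - 1 / q)
                        * rpow (U * HA2 al th (1 / 3) + W * HA3 al th (1 / 3)) (1 / q)).
  { apply (Rmult_le_compat_l h) in HX; [| lra].
    replace (h * (E / h)) with E in HX by (field; lra). exact HX. }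
  apply young_optimum; [exact Hq | exact HA1p | nra |].
  intros K HK.
  set (c := 1 / q * Rpower K (1 - q)).
  assert (Hc : 0 <= c) by (pose proof (Rpower_pos K (1 - q)); unfold c; nra).
  set (P := h * ((1 - 1 / q) * K + c * W)).
  set (Q := h * (c * (U - W))).
  assert (Hest : E <= P * HA1 th (1 / 3) + Q * HA2 al th (1 / 3)).
  { unfold E. replace (2 / 3) with (1 - 1 / 3) by field.
    apply (endpoint_estimate F F'); auto; [lra |].
    intros t Ht.
    pose proof (young_param q K (Rabs (F' t) / h) Hq HK
                  (Rdiv_le_0_compat _ _ (Rabs_pos _) Hh)) as Hy.
    apply (Rmult_le_compat_l h) in Hy; [| lra].
    replace (h * (Rabs (F' t) / h)) with (Rabs (F' t)) in Hy by (field; lra).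
    eapply Rle_trans; [exact Hy |].
    pose proof (HB t Ht) as HBt. apply (Rmult_le_compat_l c) in HBt; [| exact Hc].
    apply (Rmult_le_compat_l h) in HBt; [| lra].
    unfold P, Q. fold c. lra. }
  unfold HA3 in *. apply (Rmult_le_reg_l h); [lra |].
  replace (h * (E / h)) with E by (field; lra).
  eapply Rle_trans; [exact Hest |]. unfold P, Q, c. right. ring.
Qed.

Lemma continuous_weight th s : 0 < s -> continuous (fun s => th * Rpower s (th - 1)) s.
Proof. intros Hs. eapply continuous_of_derive, is_derive_scal, is_derive_Rpower, Hs. Qed.

Lemma ex_RInt_weighted th (F : R -> R) u v : 0 < u <= v ->
  (forall z, u <= z <= v -> continuous F z) ->
  ex_RInt (fun s => th * Rpower s (th - 1) * F s) u v.
Proof.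
  intros Huv HF. apply (ex_RInt_continuous (V := R_CompleteNormedModule)). intros z Hz.
  rewrite Rmin_left, Rmax_right in Hz by lra.
  apply (continuous_mult (fun s => th * Rpower s (th - 1)) F);
    [apply continuous_weight; lra | apply HF, Hz].
Qed.

Lemma RInt_weight th c u v : 0 < u -> 0 < v ->
  RInt (fun s => c * (th * Rpower s (th - 1))) u v = c * (Rpower v th - Rpower u th).
Proof.
  intros Hu Hv. apply (is_RInt_unique (V := R_CompleteNormedModule)).
  assert (Hmin : 0 < Rmin u v) by (apply Rmin_glb_lt; lra).
  replace (c * (Rpower v th - Rpower u th)) with (minus (c * Rpower v th) (c * Rpower u th))
    by (unfold minus, plus, opp; simpl; ring).
  apply (is_RInt_derive (fun s => c * Rpower s th)); intros x Hx.
  - apply is_derive_scal, is_derive_Rpower. lra.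
  - apply (continuous_scal_r (V := R_NormedModule) c), continuous_weight. lra.
Qed.

Lemma weighted_int_increment th (F : R -> R) M u v : 0 < th -> 0 < u <= v ->
  (forall z, u <= z <= v -> continuous F z) ->
  (forall z, u <= z <= v -> Rabs (F z) <= M) ->
  Rabs (RInt (fun s => th * Rpower s (th - 1) * F s) u v) <= M * (Rpower v th - Rpower u th).
Proof.
  intros Hth Huv HF HM.
  assert (Hex : forall c, ex_RInt (fun s => c * (th * Rpower s (th - 1))) u v).
  { intros c. apply (ex_RInt_continuous (V := R_CompleteNormedModule)). intros z Hz.
    rewrite Rmin_left, Rmax_right in Hz by lra.
    apply (continuous_scal_r (V := R_NormedModule) c), continuous_weight. lra. }
  pose proof (ex_RInt_weighted th F u v Huv HF) as HexF.
  assert (Hpt : forall x, u < x < v ->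
            - M * (th * Rpower x (th - 1)) <= th * Rpower x (th - 1) * F x <= M * (th * Rpower x (th - 1))).
  { intros x Hx.
    assert (0 < th * Rpower x (th - 1)) by (apply Rmult_lt_0_compat; [lra | apply Rpower_pos]).
    specialize (HM x ltac:(lra)). apply Rabs_le_between in HM. split; nra. }
  apply Rabs_le. split.
  - replace (- (M * (Rpower v th - Rpower u th))) with (- M * (Rpower v th - Rpower u th)) by ring.
    rewrite <- RInt_weight by lra. apply RInt_le; auto; [lra |]. apply Hpt.
  - rewrite <- RInt_weight by lra. apply RInt_le; auto; [lra |]. apply Hpt.
Qed.

Lemma weighted_int_converges th (F : R -> R) : 0 < th ->
  (forall z, 0 <= z <= 1 -> continuous F z) ->
  exists L, filterlim (weighted_int th F) (at_right 0) (locally L).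
Proof.
  intros Hth HF.
  destruct (continuous_bounded F 0 1 ltac:(lra) HF) as [M HM].
  assert (HM0 : 0 <= M) by (eapply Rle_trans; [apply Rabs_pos | apply (HM 0); lra]).
  apply (lim_of_modulus _ (fun e => M * Rpower e th) (fun e => 0 < e <= 1)).
  - eapply filter_imp; [| apply (at_right_0_below 1); lra]. intros e He; lra.
  - pose proof (lim_mult (fun _ => M) _ M 0 (filterlim_const M) (Rpower_lim_0 th Hth)) as Hw.
    rewrite Rmult_0_r in Hw. exact Hw.
  - assert (Hinc : forall u v, 0 < u <= v -> v <= 1 ->
              Rabs (weighted_int th F u - weighted_int th F v) <= M * (Rpower v th - Rpower u th)).
    { intros u v Huv Hv. unfold weighted_int.
      rewrite <- (RInt_Chasles (V := R_CompleteNormedModule) _ u v 1)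
        by (apply ex_RInt_weighted; [lra | intros; apply HF; lra]).
      unfold plus; simpl. unfold Rminus. rewrite Rplus_assoc, Rplus_opp_r, Rplus_0_r.
      apply weighted_int_increment; auto; intros; [apply HF | apply HM]; lra. }
    intros u v Hu Hv.
    pose proof (Rpower_pos u th). pose proof (Rpower_pos v th).
    rewrite (Rabs_right (M * Rpower u th)), (Rabs_right (M * Rpower v th)) by nra.
    destruct (Rle_or_lt u v) as [Huv | Hvu].
    + specialize (Hinc u v ltac:(lra) ltac:(lra)). nra.
    + specialize (Hinc v u ltac:(lra) ltac:(lra)). rewrite Rabs_minus_sym in Hinc. nra.
Qed.

(** Rescaling the fractional integrals to the unit interval. *)

Lemma continuous_Rpower_comp (g : R -> R) y s : continuous g s -> 0 < g s ->
  continuous (fun s => Rpower (g s) y) s.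
Proof.
  intros Hg Hpos. apply (continuous_comp g (fun t => Rpower t y)); [exact Hg |].
  eapply continuous_of_derive, is_derive_Rpower, Hpos.
Qed.

Lemma continuous_affine u v s : continuous (fun s => u * s + v) s.
Proof. apply (continuous_of_derive _ _ u). auto_derive; [auto | ring]. Qed.

(* The kernel identity behind the substitution s = p + h y. *)
Lemma kernel_scaling th h y : 0 < th -> 0 < h -> 0 < y ->
  h * Rpower (h * y) (th - 1) = Rpower h th / th * (th * Rpower y (th - 1)).
Proof.
  intros Hth Hh Hy. rewrite <- Rpower_mult_distr by lra.
  assert (Hpow : Rpower h th = Rpower h (th - 1) * h).
  { replace th with (th - 1 + 1) at 1 by ring. rewrite Rpower_plus, Rpower_1 by lra. reflexivity. }
  rewrite Hpow. field. lra.
Qed.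

Lemma ex_RInt_left_kernel (f : R -> R) th p u v : p < u <= v ->
  (forall z, u <= z <= v -> continuous f z) ->
  ex_RInt (fun s => Rpower (s - p) (th - 1) * f s) u v.
Proof.
  intros Huv Hf. apply (ex_RInt_continuous (V := R_CompleteNormedModule)). intros z Hz.
  rewrite Rmin_left, Rmax_right in Hz by lra.
  apply (continuous_mult (fun s => Rpower (s - p) (th - 1)) f); [| apply Hf, Hz].
  apply (continuous_Rpower_comp (fun s => s - p)); [| lra].
  eapply continuous_of_derive. auto_derive; [exact I | reflexivity].
Qed.

Lemma ex_RInt_right_kernel (f : R -> R) th q u v : u <= v < q ->
  (forall z, u <= z <= v -> continuous f z) ->
  ex_RInt (fun s => Rpower (q - s) (th - 1) * f s) u v.
Proof.
  intros Huv Hf. apply (ex_RInt_continuous (V := R_CompleteNormedModule)). intros z Hz.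
  rewrite Rmin_left, Rmax_right in Hz by lra.
  apply (continuous_mult (fun s => Rpower (q - s) (th - 1)) f); [| apply Hf, Hz].
  apply (continuous_Rpower_comp (fun s => q - s)); [| lra].
  eapply continuous_of_derive. auto_derive; [exact I | reflexivity].
Qed.

Lemma change_of_variable_left (f : R -> R) th h p e : 0 < th -> 0 < h -> 0 < e <= 1 ->
  (forall z, h * e + p <= z <= h * 1 + p -> continuous f z) ->
  RInt (fun s => Rpower (s - p) (th - 1) * f s) (h * e + p) (h * 1 + p)
  = Rpower h th / th * weighted_int th (fun t => f (h * t + p)) e.
Proof.
  intros Hth Hh He Hf.
  set (g := fun s => Rpower (s - p) (th - 1) * f s).
  assert (Hle : h * e + p <= h * 1 + p) by (apply Rplus_le_compat_r, Rmult_le_compat_l; lra).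
  assert (Hex : ex_RInt g (h * e + p) (h * 1 + p)).
  { apply ex_RInt_left_kernel; [| exact Hf].
    assert (0 < h * e) by (apply Rmult_lt_0_compat; lra). lra. }
  rewrite <- (RInt_comp_lin (V := R_CompleteNormedModule) g h p e 1 Hex).
  unfold weighted_int.
  transitivity (RInt (fun y => Rpower h th / th * (th * Rpower y (th - 1) * f (h * y + p))) e 1).
  - apply (RInt_ext (V := R_CompleteNormedModule)). intros y Hy.
    rewrite Rmin_left, Rmax_right in Hy by lra.
    unfold g, scal; simpl; unfold mult; simpl.
    replace (h * y + p - p) with (h * y) by ring.
    rewrite <- Rmult_assoc, kernel_scaling by lra. ring.
  - apply (RInt_scal (V := R_CompleteNormedModule)).
    apply ex_RInt_weighted; [lra |]. intros z Hz.
    apply (continuous_comp (fun t => h * t + p) f); [apply continuous_affine |].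
    apply Hf. split; apply Rplus_le_compat_r, Rmult_le_compat_l; lra.
Qed.

Lemma change_of_variable_right (f : R -> R) th h q e : 0 < th -> 0 < h -> 0 < e <= 1 ->
  (forall z, - h * 1 + q <= z <= - h * e + q -> continuous f z) ->
  RInt (fun s => Rpower (q - s) (th - 1) * f s) (- h * 1 + q) (- h * e + q)
  = Rpower h th / th * weighted_int th (fun t => f (- h * t + q)) e.
Proof.
  intros Hth Hh He Hf.
  set (g := fun s => Rpower (q - s) (th - 1) * f s).
  assert (Hle : - h * 1 + q <= - h * e + q) by (apply Rplus_le_compat_r; nra).
  assert (Hex : ex_RInt g (- h * e + q) (- h * 1 + q)).
  { apply (ex_RInt_swap (V := R_CompleteNormedModule)), ex_RInt_right_kernel; [| exact Hf].
    assert (0 < h * e) by (apply Rmult_lt_0_compat; lra). lra. }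
  set (G := fun t => th * Rpower t (th - 1) * f (- h * t + q)).
  assert (HexG : ex_RInt G e 1).
  { apply ex_RInt_weighted; [lra |]. intros z Hz.
    apply (continuous_comp (fun t => - h * t + q) f); [apply continuous_affine |].
    apply Hf. split; apply Rplus_le_compat_r; nra. }
  rewrite <- (opp_RInt_swap (V := R_CompleteNormedModule) g _ _ Hex).
  rewrite <- (RInt_comp_lin (V := R_CompleteNormedModule) g (- h) q e 1 Hex).
  transitivity (opp (RInt (fun y => scal (- (Rpower h th / th)) (G y)) e 1)).
  - f_equal. apply (RInt_ext (V := R_CompleteNormedModule)). intros y Hy.
    rewrite Rmin_left, Rmax_right in Hy by lra.
    unfold g, G, scal; simpl; unfold mult; simpl.
    replace (q - (- h * y + q)) with (h * y) by ring.
    replace (- h * (Rpower (h * y) (th - 1) * f (- h * y + q)))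
      with (- (h * Rpower (h * y) (th - 1)) * f (- h * y + q)) by ring.
    rewrite kernel_scaling by lra. ring.
  - rewrite (RInt_scal (V := R_CompleteNormedModule)) by exact HexG.
    unfold weighted_int, opp, scal; simpl; unfold mult; simpl. fold G. ring.
Qed.

Lemma lim_rescale (V : R -> R) c l : 0 < c ->
  filterlim V (at_right 0) (locally l) -> filterlim (fun e => V (c * e)) (at_right 0) (locally l).
Proof.
  intros Hc HV. apply (filterlim_comp _ _ _ (fun e => c * e) V _ (at_right 0)); [| exact HV].
  intros P [d Hd]. assert (Hdc : 0 < d / c) by (apply Rdiv_lt_0_compat; [apply cond_pos | lra]).
  exists (mkposreal _ Hdc). intros y Hy Hy0. apply Hd; [| simpl; nra].
  assert (Hy' : Rabs (y - 0) < d / c) by exact Hy.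
  apply ball_R. rewrite Rminus_0_r in *. rewrite Rabs_mult, (Rabs_right c) by lra.
  apply (Rmult_lt_compat_l c) in Hy'; [| lra]. replace (c * (d / c)) with (pos d) in Hy' by (field; lra).
  exact Hy'.
Qed.

Lemma lim_transfer (V W : R -> R) (k h : R) (Spec : R -> Prop) : 0 < k -> 0 < h ->
  (forall e, 0 < e <= 1 -> V (h * e) = k * W e) ->
  (exists L, filterlim W (at_right 0) (locally L)) ->
  (forall l, Spec l <-> filterlim V (at_right 0) (locally l)) ->
  filterlim W (at_right 0) (locally (/ k * epsilon (inhabits 0) Spec)).
Proof.
  intros Hk Hh HVW [L HL] HSpec.
  assert (HV : filterlim V (at_right 0) (locally (k * L))).
  { apply (filterlim_ext_loc (fun x => k * W (/ h * x))).
    - eapply filter_imp; [| apply (at_right_0_below h Hh)]. intros x Hx.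
      assert (Hxh : 0 < / h * x <= 1).
      { split; [apply Rmult_lt_0_compat; [apply Rinv_0_lt_compat |]; lra |].
        apply (Rmult_le_reg_l h); [lra |]. field_simplify; lra. }
      rewrite <- HVW by exact Hxh. f_equal. field. lra.
    - apply lim_mult; [apply filterlim_const | apply lim_rescale; [apply Rinv_0_lt_compat |]; auto]. }
  assert (HE : Spec (epsilon (inhabits 0) Spec)).
  { apply epsilon_spec. exists (k * L). apply HSpec, HV. }
  apply HSpec in HE.
  apply (filterlim_ext_loc (fun e => / k * V (h * e))).
  - eapply filter_imp; [| apply (at_right_0_below 1); lra]. intros e He.
    rewrite HVW by lra. field. lra.
  - apply lim_mult; [apply filterlim_const | apply lim_rescale; auto].
Qed.

Lemma eps_delta_iff_lim (S : R -> R -> Prop) (V : R -> R) d l : 0 < d ->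
  (forall x, 0 < x <= d -> S x (V x)) ->
  (forall x v, 0 < x <= d -> S x v -> v = V x) ->
  (forall eps, 0 < eps -> exists delta, 0 < delta /\
     forall x, 0 < x < delta -> exists v, S x v /\ Rabs (v - l) < eps)
  <-> filterlim V (at_right 0) (locally l).
Proof.
  intros Hd HS Huniq. split.
  - intros H. apply filterlim_locally. intros eps.
    destruct (H eps (cond_pos eps)) as [delta [Hdelta Hx]].
    eapply filter_imp; [| apply (at_right_0_below (Rmin delta d)), Rmin_glb_lt; lra].
    intros x Hx'. pose proof (Rmin_l delta d). pose proof (Rmin_r delta d).
    destruct (Hx x ltac:(lra)) as [v [Sv Hv]].
    rewrite (Huniq x v ltac:(lra) Sv) in Hv. exact Hv.
  - intros H eps Heps.
    apply filterlim_locally with (eps := mkposreal eps Heps) in H. destruct H as [[delta Hdelta] Hdel].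
    exists (Rmin delta d). split; [apply Rmin_glb_lt; lra |].
    intros x Hx. pose proof (Rmin_l delta d). pose proof (Rmin_r delta d).
    exists (V x). split; [apply HS; lra |].
    apply Hdel; [| simpl; lra]. apply ball_R. rewrite Rminus_0_r, Rabs_right; simpl; lra.
Qed.

Lemma Defs_is_RInt_RInt (g : R -> R) a b v : Defs.is_RInt g a b v -> v = RInt g a b.
Proof. intros [pr Hpr]. rewrite <- Hpr. symmetry. apply RInt_Reals. Qed.

Lemma Defs_is_RInt_of_ex (g : R -> R) a b : ex_RInt g a b -> Defs.is_RInt g a b (RInt g a b).
Proof. intros H. exists (ex_RInt_Reals_0 g a b H). symmetry. apply RInt_Reals. Qed.

Lemma lim_left_int_iff (g : R -> R) a b l : a < b ->
  (forall x, 0 < x <= b - a -> ex_RInt g (a + x) b) ->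
  lim_left_int g a b l <-> filterlim (fun x => RInt g (a + x) b) (at_right 0) (locally l).
Proof.
  intros Hab Hex. apply (eps_delta_iff_lim (fun x v => Defs.is_RInt g (a + x) b v) _ (b - a)); [lra | |].
  - intros x Hx. apply Defs_is_RInt_of_ex, Hex, Hx.
  - intros x v _. apply Defs_is_RInt_RInt.
Qed.

Lemma lim_right_int_iff (g : R -> R) a b l : a < b ->
  (forall x, 0 < x <= b - a -> ex_RInt g a (b - x)) ->
  lim_right_int g a b l <-> filterlim (fun x => RInt g a (b - x)) (at_right 0) (locally l).
Proof.
  intros Hab Hex. apply (eps_delta_iff_lim (fun x v => Defs.is_RInt g a (b - x) v) _ (b - a)); [lra | |].
  - intros x Hx. apply Defs_is_RInt_of_ex, Hex, Hx.
  - intros x v _. apply Defs_is_RInt_RInt.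
Qed.

(* The limits defining J^th_{c-} f(x) and J^th_{c+} f(x), without the factor 1/Gamma(th). *)
Definition frac_left (th c : R) (f : R -> R) (x : R) : R :=
  epsilon (inhabits 0) (fun l => lim_left_int (fun s => Rpower (s - x) (th - 1) * f s) x c l).

Definition frac_right (th c : R) (f : R -> R) (x : R) : R :=
  epsilon (inhabits 0) (fun l => lim_right_int (fun s => Rpower (x - s) (th - 1) * f s) c x l).

Lemma weighted_lim_left (f : R -> R) th h p : 0 < th -> 0 < h ->
  (forall z, p <= z <= p + h -> continuous f z) ->
  filterlim (weighted_int th (fun t => f (h * t + p))) (at_right 0)
    (locally (th / Rpower h th * frac_left th (p + h) f p)).
Proof.
  intros Hth Hh Hf. pose proof (Rpower_pos h th).
  replace (th / Rpower h th) with (/ (Rpower h th / th)) by (field; lra).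
  apply (lim_transfer (fun x => RInt (fun s => Rpower (s - p) (th - 1) * f s) (p + x) (p + h)) _ _ h).
  - apply Rdiv_lt_0_compat; lra.
  - exact Hh.
  - intros e He. replace (p + h * e) with (h * e + p) by ring. replace (p + h) with (h * 1 + p) by ring.
    apply change_of_variable_left; auto. intros z Hz. apply Hf. nra.
  - apply weighted_int_converges; [exact Hth |]. intros z Hz.
    apply (continuous_comp (fun t => h * t + p) f); [apply continuous_affine | apply Hf; nra].
  - intros l. apply lim_left_int_iff; [lra |]. intros x Hx.
    apply ex_RInt_left_kernel; [lra |]. intros z Hz. apply Hf. lra.
Qed.

Lemma weighted_lim_right (f : R -> R) th h q : 0 < th -> 0 < h ->
  (forall z, q - h <= z <= q -> continuous f z) ->
  filterlim (weighted_int th (fun t => f (- h * t + q))) (at_right 0)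
    (locally (th / Rpower h th * frac_right th (q - h) f q)).
Proof.
  intros Hth Hh Hf. pose proof (Rpower_pos h th).
  replace (th / Rpower h th) with (/ (Rpower h th / th)) by (field; lra).
  apply (lim_transfer (fun x => RInt (fun s => Rpower (q - s) (th - 1) * f s) (q - h) (q - x)) _ _ h).
  - apply Rdiv_lt_0_compat; lra.
  - exact Hh.
  - intros e He. replace (q - h * e) with (- h * e + q) by ring. replace (q - h) with (- h * 1 + q) by ring.
    apply change_of_variable_right; auto. intros z Hz. apply Hf. nra.
  - apply weighted_int_converges; [exact Hth |]. intros z Hz.
    apply (continuous_comp (fun t => - h * t + q) f); [apply continuous_affine | apply Hf; nra].
  - intros l. apply lim_right_int_iff; [lra |]. intros x Hx.
    apply ex_RInt_right_kernel; [lra |]. intros z Hz. apply Hf. lra.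
Qed.

(** Euler's Gamma function: positivity and Gamma(th+1) = th Gamma(th). *)

Definition gamma_kernel (th t : R) : R := Rpower t (th - 1) * exp (- t).

Definition gamma_lim (th l : R) : Prop :=
  filterlim (fun hX => RInt (gamma_kernel th) (fst hX) (snd hX))
    (filter_prod (at_right 0) (Rbar_locally p_infty)) (locally l).

Definition Gamma_spec (th l : R) : Prop :=
  forall eps, 0 < eps -> exists delta, 0 < delta /\ exists M,
    forall h X, 0 < h < delta -> M < X ->
      exists v, Defs.is_RInt (fun t => Rpower t (th - 1) * exp (- t)) h X v /\ Rabs (v - l) < eps.

Lemma continuous_gamma_kernel th t : 0 < t -> continuous (gamma_kernel th) t.
Proof.
  intros Ht. apply (continuous_mult (fun t => Rpower t (th - 1)) (fun t => exp (- t))).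
  - eapply continuous_of_derive, is_derive_Rpower, Ht.
  - apply (continuous_of_derive _ _ (- exp (- t))). auto_derive; [exact I | ring].
Qed.

Lemma ex_RInt_gamma_kernel th a b : 0 < a -> 0 < b -> ex_RInt (gamma_kernel th) a b.
Proof.
  intros Ha Hb. apply (ex_RInt_continuous (V := R_CompleteNormedModule)). intros z Hz.
  apply continuous_gamma_kernel. eapply Rlt_le_trans; [| apply Hz]. apply Rmin_glb_lt; lra.
Qed.

Lemma gamma_lim_iff th l : Gamma_spec th l <-> gamma_lim th l.
Proof.
  split.
  - intros H. apply filterlim_locally. intros eps.
    destruct (H eps (cond_pos eps)) as [delta [Hdelta [M HM]]].
    exists (fun h => 0 < h < delta) (fun X => Rmax M 1 < X).
    + apply at_right_0_below, Hdelta.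
    + exists (Rmax M 1). auto.
    + intros h X Hh HX. pose proof (Rmax_l M 1). pose proof (Rmax_r M 1).
      destruct (HM h X Hh ltac:(lra)) as [v [Hv Hvl]].
      apply Defs_is_RInt_RInt in Hv. simpl. unfold gamma_kernel. rewrite <- Hv. exact Hvl.
  - intros H eps Heps.
    apply filterlim_locally with (eps := mkposreal eps Heps) in H.
    destruct H as [Qh QX [[d Hd] HQ] [M HM] HQX].
    exists d. split; [exact Hd |]. exists (Rmax M 1). intros h X Hh HX.
    pose proof (Rmax_l M 1). pose proof (Rmax_r M 1).
    exists (RInt (gamma_kernel th) h X). split.
    + apply Defs_is_RInt_of_ex, ex_RInt_gamma_kernel; lra.
    + apply (HQX h X); [apply HQ; [apply ball_R; rewrite Rminus_0_r, Rabs_right | ]; simpl; lra |].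
      apply HM. lra.
Qed.

(* The limits are unique, so Gamma(th) is the limit whenever one exists. *)
Lemma Gamma_eq th l : gamma_lim th l -> Gamma th = l.
Proof.
  intros Hl.
  assert (HG : gamma_lim th (Gamma th)).
  { apply gamma_lim_iff. apply (epsilon_spec (inhabits 0) (Gamma_spec th)).
    exists l. apply gamma_lim_iff, Hl. }
  exact (filterlim_locally_unique _ _ _ HG Hl).
Qed.

Lemma power_exp_bound y : exists C, 0 < C /\ forall t, 1 <= t -> Rpower t y * exp (- t) <= C.
Proof.
  destruct (INR_unbounded y) as [N HN].
  pose proof (lt_0_INR _ (Factorial.lt_O_fact N)) as Hfact.
  exists (INR (Factorial.fact N)). split; [exact Hfact |]. intros t Ht.
  assert (Hpow : Rpower t y <= t ^ N) by (rewrite <- Rpower_pow by lra; apply Rle_Rpower; lra).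
  assert (Hterm : t ^ N / INR (Factorial.fact N) <= exp t).
  { eapply Rle_trans; [| apply (exp_ge_taylor t N); lra].
    destruct N as [| n]; [simpl; lra |]. rewrite tech5.
    enough (0 <= sum_f_R0 (fun k => t ^ k / INR (Factorial.fact k)) n) by lra.
    apply cond_pos_sum. intros k.
    apply Rdiv_le_0_compat; [apply pow_le; lra | apply lt_0_INR, Factorial.lt_O_fact]. }
  assert (Hexp : exp t * exp (- t) = 1) by (rewrite <- exp_plus, Rplus_opp_r; apply exp_0).
  pose proof (exp_pos (- t)).
  apply (Rmult_le_compat_r (exp (- t))) in Hpow; [| lra].
  apply (Rmult_le_compat_r (INR (Factorial.fact N) * exp (- t))) in Hterm; [| nra].
  replace (t ^ N / INR (Factorial.fact N) * (INR (Factorial.fact N) * exp (- t)))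
    with (t ^ N * exp (- t)) in Hterm by (field; lra).
  nra.
Qed.

Lemma lim_inv_infty C : filterlim (fun X => C / X) (Rbar_locally p_infty) (locally 0).
Proof.
  apply filterlim_locally. intros eps. pose proof (cond_pos eps).
  exists (Rabs C / eps + 1). intros X HX.
  assert (0 < X) by (pose proof (Rabs_pos C); pose proof (Rdiv_le_0_compat _ _ (Rabs_pos C) H); lra).
  apply ball_R. rewrite Rminus_0_r. unfold Rdiv. rewrite Rabs_mult, Rabs_inv, (Rabs_right X) by lra.
  apply (Rmult_lt_reg_r X); [lra |]. field_simplify; [| lra].
  apply (Rmult_lt_compat_l eps) in HX; [| lra]. replace (eps * (Rabs C / eps + 1)) with (Rabs C + eps) in HX
    by (field; lra). nra.
Qed.

Lemma gamma_kernel_pos th t : 0 < t -> 0 < gamma_kernel th t.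
Proof. intros. apply Rmult_lt_0_compat; [apply Rpower_pos | apply exp_pos]. Qed.

Lemma gamma_kernel_decay th : exists C, 0 < C /\ forall t, 1 <= t -> gamma_kernel th t <= C / (t * t).
Proof.
  destruct (power_exp_bound (th + 1)) as [C [HC HCb]]. exists C. split; [exact HC |].
  intros t Ht. specialize (HCb t Ht). unfold gamma_kernel.
  replace (th + 1) with ((th - 1) + INR 2) in HCb by (simpl; ring).
  rewrite Rpower_plus, (Rpower_pow 2 t) in HCb by lra. simpl in HCb.
  apply (Rmult_le_reg_r (t * t)); [nra |]. replace (C / (t * t) * (t * t)) with C by (field; lra).
  lra.
Qed.

Lemma continuous_inv_square C x : 0 < x -> continuous (fun t => C / (t * t)) x.
Proof.
  intros Hx. apply (continuous_of_derive _ _ (- 2 * C / (x * x * x))).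
  auto_derive; [nra | field; lra].
Qed.

Lemma RInt_inv_square C u v : 0 < u <= v -> RInt (fun t => C / (t * t)) u v = C / u - C / v.
Proof.
  intros Huv.
  assert (Hd : is_RInt (fun t => C / (t * t)) u v (minus (- C / v) (- C / u))).
  { apply (is_RInt_derive (fun t => - C / t)); intros x Hx; rewrite Rmin_left, Rmax_right in Hx by lra.
    - auto_derive; [lra | field; lra].
    - apply continuous_inv_square. lra. }
  apply (is_RInt_unique (V := R_CompleteNormedModule)) in Hd. rewrite Hd.
  unfold minus, plus, opp; simpl. field. lra.
Qed.

(* int_1^X t^(th-1) e^(-t) dt converges as X -> +oo: its increments are O(1/X). *)
Lemma gamma_tail_converges th :
  exists L, filterlim (fun X => RInt (gamma_kernel th) 1 X) (Rbar_locally p_infty) (locally L).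
Proof.
  destruct (gamma_kernel_decay th) as [C [HC Hk]].
  assert (Hinc : forall u v, 1 <= u <= v ->
            Rabs (RInt (gamma_kernel th) 1 v - RInt (gamma_kernel th) 1 u) <= C / u - C / v).
  { intros u v Huv.
    rewrite <- (RInt_Chasles (V := R_CompleteNormedModule) _ 1 u v) by (apply ex_RInt_gamma_kernel; lra).
    unfold plus; simpl. rewrite Rplus_comm. unfold Rminus. rewrite Rplus_assoc, Rplus_opp_r, Rplus_0_r.
    rewrite Rabs_right by (apply Rle_ge, RInt_ge_0; [lra | apply ex_RInt_gamma_kernel; lra |
                                                     intros; left; apply gamma_kernel_pos; lra]).
    eapply Rle_trans; [| apply Req_le, RInt_inv_square; lra].
    apply RInt_le; [lra | apply ex_RInt_gamma_kernel; lra | |].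
    - apply (ex_RInt_continuous (V := R_CompleteNormedModule)). intros x Hx.
      rewrite Rmin_left, Rmax_right in Hx by lra. apply continuous_inv_square. lra.
    - intros x Hx. apply Hk. lra. }
  apply (lim_of_modulus _ (fun X => C / X) (fun X => 1 <= X)); [exists 1; intros; lra | apply lim_inv_infty |].
  intros u v Hu Hv.
  assert (0 < C / u) by (apply Rdiv_lt_0_compat; lra).
  assert (0 < C / v) by (apply Rdiv_lt_0_compat; lra).
  rewrite (Rabs_right (C / u)), (Rabs_right (C / v)) by lra.
  destruct (Rle_or_lt u v) as [Huv | Hvu].
  - rewrite Rabs_minus_sym. specialize (Hinc u v ltac:(lra)). lra.
  - specialize (Hinc v u ltac:(lra)). lra.
Qed.

(* Split at 1: the part near 0 is a weighted integral of e^(-s)/th. *)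
Lemma gamma_lim_exists th : 0 < th -> exists l, gamma_lim th l.
Proof.
  intros Hth.
  destruct (weighted_int_converges th (fun s => exp (- s) / th) Hth) as [L1 HL1].
  { intros z Hz. apply (continuous_of_derive _ _ (- exp (- z) / th)).
    auto_derive; [exact I | field; lra]. }
  assert (Hlow : filterlim (fun h => RInt (gamma_kernel th) h 1) (at_right 0) (locally L1)).
  { eapply filterlim_ext; [| exact HL1]. intros h. unfold weighted_int.
    apply (RInt_ext (V := R_CompleteNormedModule)). intros s _.
    change (th * Rpower s (th - 1) * (exp (- s) / th) = Rpower s (th - 1) * exp (- s)). field. lra. }
  destruct (gamma_tail_converges th) as [L2 Hhigh].
  exists (L1 + L2).
  apply (filterlim_ext_loc (fun hX => RInt (gamma_kernel th) (fst hX) 1 + RInt (gamma_kernel th) 1 (snd hX))).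
  - exists (fun h => 0 < h < 1) (fun X => 1 < X); [apply at_right_0_below; lra | exists 1; auto |].
    intros h X Hh HX. simpl. symmetry.
    rewrite <- (RInt_Chasles (V := R_CompleteNormedModule) _ h 1 X) by (apply ex_RInt_gamma_kernel; lra).
    reflexivity.
  - apply lim_plus.
    + exact (filterlim_comp _ _ _ fst _ _ _ _ filterlim_fst Hlow).
    + exact (filterlim_comp _ _ _ snd _ _ _ _ filterlim_snd Hhigh).
Qed.

(* The kernel is positive, so the limit is at least int_1^2 of it. *)
Lemma gamma_lim_pos th l : gamma_lim th l -> 0 < l.
Proof.
  intros Hl.
  assert (Hc0 : 0 < RInt (gamma_kernel th) 1 2).
  { apply RInt_gt_0; [lra | intros; apply gamma_kernel_pos; lra | intros; apply continuous_gamma_kernel; lra]. }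
  eapply Rlt_le_trans; [exact Hc0 |].
  apply (lim_le (fun _ => RInt (gamma_kernel th) 1 2) _ _ _ (filterlim_const _) Hl).
  exists (fun h => 0 < h < 1) (fun X => 2 < X); [apply at_right_0_below; lra | exists 2; auto |].
  intros h X Hh HX. simpl.
  assert (Hpos : forall a b, 0 < a <= b -> 0 <= RInt (gamma_kernel th) a b).
  { intros a b Hab. apply RInt_ge_0; [lra | apply ex_RInt_gamma_kernel; lra |].
    intros; left; apply gamma_kernel_pos; lra. }
  rewrite <- (RInt_Chasles (V := R_CompleteNormedModule) _ h 1 X) by (apply ex_RInt_gamma_kernel; lra).
  rewrite <- (RInt_Chasles (V := R_CompleteNormedModule) _ 1 2 X) by (apply ex_RInt_gamma_kernel; lra).
  unfold plus; simpl. pose proof (Hpos h 1 ltac:(lra)). pose proof (Hpos 2 X ltac:(lra)). lra.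
Qed.

Lemma gamma_kernel_by_parts th h X : 0 < h -> 0 < X ->
  RInt (gamma_kernel (th + 1)) h X
  = Rpower h th * exp (- h) - Rpower X th * exp (- X) + th * RInt (gamma_kernel th) h X.
Proof.
  intros Hh HX.
  assert (Hmin : 0 < Rmin h X) by (apply Rmin_glb_lt; lra).
  set (bnd := fun t => Rpower t th * exp (- t)).
  set (df := fun t => bnd t - th * gamma_kernel th t).
  assert (H1 : is_RInt df h X (minus (- bnd X) (- bnd h))).
  { apply (is_RInt_derive (fun t => - bnd t)); intros x Hx.
    - unfold df, bnd, gamma_kernel. auto_derive; [repeat split; apply ex_derive_Rpower; lra |].
      rewrite Derive_Rpower by lra. ring.
    - unfold df, bnd, gamma_kernel. eapply continuous_of_derive. auto_derive.
      + repeat split; apply ex_derive_Rpower; lra.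
      + reflexivity. }
  assert (H2 : is_RInt (fun t => th * gamma_kernel th t) h X (th * RInt (gamma_kernel th) h X)).
  { apply (is_RInt_scal (V := R_NormedModule)), (RInt_correct (V := R_CompleteNormedModule)).
    apply ex_RInt_gamma_kernel; lra. }
  apply (is_RInt_unique (V := R_CompleteNormedModule)).
  replace (Rpower h th * exp (- h) - Rpower X th * exp (- X) + th * RInt (gamma_kernel th) h X)
    with (plus (minus (- bnd X) (- bnd h)) (th * RInt (gamma_kernel th) h X))
    by (unfold bnd, minus, plus, opp; simpl; ring).
  eapply (is_RInt_ext (V := R_NormedModule)); [| exact (is_RInt_plus _ _ _ _ _ _ H1 H2)].
  intros t _. unfold df, bnd, gamma_kernel, plus; simpl.
  replace (th + 1 - 1) with th by ring. ring.
Qed.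

(* The recurrence at the level of limits: the boundary terms of the
   integration by parts vanish at 0+ and at +oo. *)
Lemma gamma_lim_succ th l : 0 < th -> gamma_lim th l -> gamma_lim (th + 1) (th * l).
Proof.
  intros Hth Hl.
  assert (Hat0 : filterlim (fun h => Rpower h th * exp (- h)) (at_right 0) (locally 0)).
  { assert (Hexp : continuous (fun h => exp (- h)) 0).
    { apply (continuous_of_derive _ _ (- exp (- 0))). auto_derive; [exact I | ring]. }
    pose proof (lim_mult _ _ _ _ (Rpower_lim_0 th Hth) (lim_right_of_continuous _ _ Hexp)) as H.
    rewrite Rmult_0_l in H. exact H. }
  assert (Hatoo : filterlim (fun X => Rpower X th * exp (- X)) (Rbar_locally p_infty) (locally 0)).
  { destruct (power_exp_bound (th + 1)) as [C [HC HCb]].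
    apply (filterlim_le_le (fun _ => 0) _ (fun X => C / X) (Finite 0));
      [| apply filterlim_const | apply lim_inv_infty].
    exists 1. intros X HX. specialize (HCb X ltac:(lra)).
    rewrite Rpower_plus, Rpower_1 in HCb by lra.
    pose proof (Rpower_pos X th). pose proof (exp_pos (- X)). split; [nra |].
    apply (Rmult_le_reg_r X); [lra |]. replace (C / X * X) with C by (field; lra). nra. }
  apply (filterlim_ext_loc (fun hX => Rpower (fst hX) th * exp (- fst hX)
          - Rpower (snd hX) th * exp (- snd hX) + th * RInt (gamma_kernel th) (fst hX) (snd hX))).
  - exists (fun h => 0 < h < 1) (fun X => 1 < X); [apply at_right_0_below; lra | exists 1; auto |].
    intros h X Hh HX. simpl. symmetry. apply gamma_kernel_by_parts; lra.
  - replace (th * l) with (0 - 0 + th * l) by ring.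
    apply lim_plus; [apply lim_minus | apply lim_mult; [apply filterlim_const | exact Hl]].
    + exact (filterlim_comp _ _ _ fst _ _ _ _ filterlim_fst Hat0).
    + exact (filterlim_comp _ _ _ snd _ _ _ _ filterlim_snd Hatoo).
Qed.

Lemma Gamma_pos_succ th : 0 < th -> 0 < Gamma th /\ Gamma (th + 1) = th * Gamma th.
Proof.
  intros Hth. destruct (gamma_lim_exists th Hth) as [l Hl].
  rewrite (Gamma_eq th l Hl), (Gamma_eq (th + 1) (th * l) (gamma_lim_succ th l Hth Hl)).
  split; [exact (gamma_lim_pos th l Hl) | reflexivity].
Qed.

Lemma int_pt_between (I : R -> Prop) p r x : is_interval I -> int_pt I p -> int_pt I r ->
  p <= x <= r -> int_pt I x.
Proof.
  intros HI [d1 [Hd1 H1]] [d2 [Hd2 H2]] Hx.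
  assert (Ip : I p) by (apply H1; rewrite Rminus_diag, Rabs_R0; lra).
  assert (Ir : I r) by (apply H2; rewrite Rminus_diag, Rabs_R0; lra).
  exists (Rmin d1 d2). split; [apply Rmin_glb_lt; lra |].
  intros y Hy. pose proof (Rmin_l d1 d2). pose proof (Rmin_r d1 d2).
  apply Rabs_def2 in Hy.
  destruct (Rlt_or_le y p) as [Hyp | Hyp]; [apply H1, Rabs_def1; lra |].
  destruct (Rlt_or_le r y) as [Hyr | Hyr]; [apply H2, Rabs_def1; lra |].
  apply (HI p y r); auto.
Qed.

Lemma convex_at_point alpha m (K : R -> Prop) (g : R -> R) X Y t :
  alpha_m_convex alpha m K g -> K X -> K Y -> 0 < t < 1 -> K (t * X + m * (1 - t) * Y) ->
  g (t * X + m * (1 - t) * Y) <= Rpower t alpha * g X + (1 - Rpower t alpha) * (m * g Y).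
Proof.
  intros Hconv HX HY Ht HK. rewrite <- tpow_of_pos by lra.
  eapply Rle_trans; [apply Hconv; auto; lra | right; ring].
Qed.

Section Halves.
Variables (f f' : R -> R) (K : R -> Prop) (th alpha m q : R).
Hypothesis Hth : 0 < th.
Hypothesis Hal : 0 <= alpha.
Hypothesis Hq : 1 <= q.
Hypothesis Hm : 0 < m.
Hypothesis Hconv : alpha_m_convex alpha m K (fun x => rpow (Rabs (f' x)) q).

Let A1 := HA1 th (1 / 3).
Let A2 := HA2 alpha th (1 / 3).
Let A3 := HA3 alpha th (1 / 3).

Lemma left_half_estimate a c : m * a < c -> K a -> K c ->
  (forall x, m * a <= x <= c -> K x) ->
  (forall x, m * a <= x < 2 * c - m * a -> is_derive f x (f' x)) ->
  Rabs (2 / 3 * f c + 1 / 3 * f (m * a) - th / Rpower (c - m * a) th * frac_left th c f (m * a))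
  <= (c - m * a) * (rpow A1 (1 - 1 / q)
       * rpow (rpow (Rabs (f' c)) q * A2 + m * rpow (Rabs (f' a)) q * A3) (1 / q)).
Proof.
  intros Hac Ka Kc HK Hder. set (h := c - m * a).
  assert (Hh : 0 < h) by (unfold h; lra).
  replace (m * rpow (Rabs (f' a)) q * A3) with ((m * rpow (Rabs (f' a)) q) * A3) by ring.
  replace (f c) with (f (h * 1 + m * a)) by (f_equal; unfold h; ring).
  replace (f (m * a)) with (f (h * 0 + m * a)) at 1 by (f_equal; ring).
  apply (endpoint_power_mean (fun t => f (h * t + m * a)) (fun t => h * f' (h * t + m * a)));
    auto using rpow_nonneg; [pose proof (rpow_nonneg (Rabs (f' a)) q); nra | | |].
  - intros t Ht. apply (is_derive_comp f (fun t => h * t + m * a)).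
    + apply Hder. unfold h in *. nra.
    + auto_derive; [exact I | ring].
  - intros t Ht. rewrite Rabs_mult, (Rabs_right h), Rmult_comm by lra. unfold Rdiv. rewrite Rmult_assoc, Rinv_r, Rmult_1_r by lra.
    replace (h * t + m * a) with (t * c + m * (1 - t) * a) by (unfold h; ring).
    apply (convex_at_point alpha m K (fun x => rpow (Rabs (f' x)) q)); auto.
    apply HK. unfold h in *. nra.
  - replace (frac_left th c f (m * a)) with (frac_left th (m * a + h) f (m * a))
      by (f_equal; unfold h; ring).
    apply weighted_lim_left; auto. intros z Hz. eapply continuous_of_derive, Hder. unfold h in *. lra.
Qed.

Lemma right_half_estimate b c : c < m * b -> K b -> K c ->
  (forall x, c <= x <= m * b -> K x) ->
  (forall x, 2 * c - m * b < x <= m * b -> is_derive f x (f' x)) ->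
  Rabs (2 / 3 * f c + 1 / 3 * f (m * b) - th / Rpower (m * b - c) th * frac_right th c f (m * b))
  <= (m * b - c) * (rpow A1 (1 - 1 / q)
       * rpow (rpow (Rabs (f' c)) q * A2 + m * rpow (Rabs (f' b)) q * A3) (1 / q)).
Proof.
  intros Hbc Kb Kc HK Hder. set (h := m * b - c).
  assert (Hh : 0 < h) by (unfold h; lra).
  replace (m * rpow (Rabs (f' b)) q * A3) with ((m * rpow (Rabs (f' b)) q) * A3) by ring.
  replace (f c) with (f (- h * 1 + m * b)) by (f_equal; unfold h; ring).
  replace (f (m * b)) with (f (- h * 0 + m * b)) at 1 by (f_equal; ring).
  apply (endpoint_power_mean (fun t => f (- h * t + m * b)) (fun t => - h * f' (- h * t + m * b)));
    auto using rpow_nonneg; [pose proof (rpow_nonneg (Rabs (f' b)) q); nra | | |].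
  - intros t Ht. apply (is_derive_comp f (fun t => - h * t + m * b)).
    + apply Hder. unfold h in *. nra.
    + auto_derive; [exact I | ring].
  - intros t Ht. rewrite Rabs_mult, Rabs_Ropp, (Rabs_right h), Rmult_comm by lra.
    unfold Rdiv. rewrite Rmult_assoc, Rinv_r, Rmult_1_r by lra.
    replace (- h * t + m * b) with (t * c + m * (1 - t) * b) by (unfold h; ring).
    apply (convex_at_point alpha m K (fun x => rpow (Rabs (f' x)) q)); auto.
    apply HK. unfold h in *. nra.
  - replace (frac_right th c f (m * b)) with (frac_right th (m * b - h) f (m * b))
      by (f_equal; unfold h; ring).
    apply weighted_lim_right; auto. intros z Hz. eapply continuous_of_derive, Hder. unfold h in *. lra.
Qed.
End Halves.

(* Averaging the two half estimates gives the Simpson-type inequality. *)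
Lemma simpson_assembly th m a b fa fc fb IL IR B XL XR : 0 < th -> 0 < m -> a < b -> 0 < Gamma th ->
  Rabs (2 / 3 * fc + 1 / 3 * fa - th / Rpower (m * (b - a) / 2) th * IL) <= m * (b - a) / 2 * (B * XL) ->
  Rabs (2 / 3 * fc + 1 / 3 * fb - th / Rpower (m * (b - a) / 2) th * IR) <= m * (b - a) / 2 * (B * XR) ->
  Rabs (/ 6 * (fa + 4 * fc + fb)
        - th * Gamma th * rpow 2 (th - 1) / (rpow m th * rpow (b - a) th)
          * (/ Gamma th * IL + / Gamma th * IR))
  <= m * (b - a) / 4 * B * (XL + XR).
Proof.
  intros Hth Hm Hab HG HL HR. set (h := m * (b - a) / 2) in *.
  assert (Hh : 0 < h) by (unfold h; nra).
  rewrite !rpow_of_pos by lra.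
  assert (P1 : Rpower h th * Rpower 2 th = Rpower m th * Rpower (b - a) th).
  { rewrite !Rpower_mult_distr by lra. f_equal. unfold h. field. }
  assert (P2 : Rpower 2 (th - 1) * 2 = Rpower 2 th).
  { replace th with (th - 1 + 1) at 2 by ring. rewrite Rpower_plus, Rpower_1; lra. }
  pose proof (Rpower_pos h th). pose proof (Rpower_pos 2 th).
  pose proof (Rpower_pos m th). pose proof (Rpower_pos (b - a) th).
  replace (/ 6 * (fa + 4 * fc + fb)
           - th * Gamma th * Rpower 2 (th - 1) / (Rpower m th * Rpower (b - a) th)
             * (/ Gamma th * IL + / Gamma th * IR))
    with (/ 2 * ((2 / 3 * fc + 1 / 3 * fa - th / Rpower h th * IL)
                + (2 / 3 * fc + 1 / 3 * fb - th / Rpower h th * IR)))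
    by (rewrite <- P1, <- P2; field; repeat split; lra).
  rewrite Rabs_mult, Rabs_right by lra.
  pose proof (Rabs_triang (2 / 3 * fc + 1 / 3 * fa - th / Rpower h th * IL)
                          (2 / 3 * fc + 1 / 3 * fb - th / Rpower h th * IR)).
  replace (m * (b - a) / 4) with (h / 2) by (unfold h; field).
  nra.
Qed.

Theorem mainTheorem5 :
  forall (I : R -> Prop) (f f' : R -> R) (m alpha a b q th : R),
    is_interval I ->
    (forall x, I x -> 0 <= x) ->
    (forall x, int_pt I x -> derivable_pt_lim f x (f' x)) ->
    0 < m <= 1 ->
    0 <= alpha <= 1 ->
    a < b ->
    int_pt I (m * a) ->
    int_pt I b ->
    alpha_m_convex alpha m (fun x => m * a <= x <= b)
      (fun x => rpow (Rabs (f' x)) q) ->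
    1 <= q ->
    0 < th ->
    let c := m * (a + b) / 2 in
    Rabs (/ 6 * (f (m * a) + 4 * f c + f (m * b))
          - Gamma (th + 1) * rpow 2 (th - 1) / (rpow m th * rpow (b - a) th)
            * (JL th c f (m * a) + JR th c f (m * b)))
    <= m * (b - a) / 4 * rpow (HA1 th (1 / 3)) (1 - 1 / q) *
       ( rpow (rpow (Rabs (f' c)) q * HA2 alpha th (1 / 3)
               + m * rpow (Rabs (f' a)) q * HA3 alpha th (1 / 3)) (1 / q)
       + rpow (rpow (Rabs (f' c)) q * HA2 alpha th (1 / 3)
               + m * rpow (Rabs (f' b)) q * HA3 alpha th (1 / 3)) (1 / q)).
Proof.
  intros I f f' m alpha a b q th HI Hnn Hder Hm Hal Hab Hma Hb Hconv Hq Hth c.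
  (* f is differentiable on [m a, b], and 0 <= a since I lies in [0, +oo) *)
  assert (Hder' : forall x, m * a <= x <= b -> is_derive f x (f' x)).
  { intros x Hx. apply is_derive_Reals, Hder, (int_pt_between I (m * a) b); auto. }
  assert (Ha0 : 0 <= a).
  { destruct Hma as [d [Hd Hy]]. pose proof (Hnn _ (Hy (m * a) ltac:(rewrite Rminus_diag, Rabs_R0; lra))). nra. }
  destruct (Gamma_pos_succ th Hth) as [HG HGs].
  rewrite HGs. unfold JL, JR. fold (frac_left th c f (m * a)) (frac_right th c f (m * b)).
  apply simpson_assembly; [lra | lra | lra | exact HG | |].
  - replace (m * (b - a) / 2) with (c - m * a) by (unfold c; field).
    apply (left_half_estimate f f' (fun x => m * a <= x <= b) th alpha m q); unfold c in *;
      auto; try lra; try nra; intros x Hx; try apply Hder'; split; nra.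
  - replace (m * (b - a) / 2) with (m * b - c) by (unfold c; field).
    apply (right_half_estimate f f' (fun x => m * a <= x <= b) th alpha m q); unfold c in *;
      auto; try lra; try nra; intros x Hx; try apply Hder'; split; nra.
Qed.
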